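(* For each $n\ge1$ and $\epsilon\ge0$, the set $D^\epsilon_n=\{\vec w\in\mathcal{W}^n:N^\epsilon_n(\vec w)\ne\emptyset\}$ is closed. Moreover, there exists a universally measurable map $\hat x:D^\epsilon_n\to\mathcal{X}^n$ such that $\hat x(\vec w)\in N^\epsilon_n(\vec w)$ for each $\vec w\in D^\epsilon_n$.
   Context: Standing assumptions: $\mathcal{X}$ compact metric space, $\mathcal{W}$ complete separable metric space; $\mathcal{P}(S)$ = Borel probability measures on $S$ with the weak topology. $\mathcal{C}$ maps $w$ to a nonempty closed $\mathcal{C}(w)\subset\mathcal{X}$, continuous in the sense that $\mathrm{Gr}(\mathcal{C})=\{(w,x):x\in\mathcal{C}(w)\}$ is closed and whenever $w_n\to w$, $x\in\mathcal{C}(w)$ there exist $n_k$, $x_{n_k}\in\mathcal{C}(w_{n_k})$ with $x_{n_k}\to x$. $F:\mathcal{P}(\mathcal{W}\times\mathcal{X})\times\mathcal{W}\times\mathcal{X}\to\mathbb{R}$ bounded continuous. $N^\epsilon_n(w_1,\dots,w_n)$ is the set of $\epsilon$-Nash equilibria with type vector $(w_1,\dots,w_n)$, i.e. of $\vec x=(x_1,\dots,x_n)\in\mathcal{X}^n$ with $x_i\in\mathcal{C}(w_i)$ and, writing $m=\frac1n\sum_k\delta_{(w_k,x_k)}$, $F(m,w_i,x_i)-\inf_{y\in\mathcal{C}(w_i)}F(m+\frac1n(\delta_{(w_i,y)}-\delta_{(w_i,x_i)}),w_i,y)\le\epsilon$ for all $i$. *)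

From HB Require Import structures.
From mathcomp Require Import all_boot all_order all_algebra.
From mathcomp Require Import all_classical all_reals all_analysis.
Set Implicit Arguments. Unset Strict Implicit. Unset Printing Implicit Defensive.
Import Order.TTheory GRing.Theory Num.Theory.
Import numFieldTopology.Exports.
Local Open Scope classical_set_scope.
Local Open Scope ring_scope.

Definition borel (T : topologicalType) := g_sigma_algebraType (@open T).

Definition tuples (n : nat) (W : Type) := {ptws 'I_n -> W}.
HB.instance Definition _ n (W : topologicalType) := Topological.on (tuples n W).
HB.instance Definition _ n (W : ptopologicalType) :=
  Pointed.copy (tuples n W) ('I_n -> W).

(** Universally measurable sets: sets which are measurable for the
    completion of every Borel probability measure. *)
Definition univ_measurable (R : realType) (T : ptopologicalType) (A : set T) :=
  forall mu : probability (borel T) R,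
    exists B1 B2 : set (borel T),
      [/\ measurable B1, measurable B2, B1 `<=` A, A `<=` B2 &
          mu (B2 `\` B1) = 0%E].

Definition univ_measurable_fun (R : realType) (T U : ptopologicalType)
    (D : set T) (f : T -> U) :=
  forall B : set (borel U), measurable B ->
    univ_measurable R (D `&` f @^-1` B).

Section game.
Context (R : realType) (W X : ptopologicalType).

(** The empirical measure (1/n) sum_k delta_{v k} on W x X (n >= 1 atoms,
    indexed by 'I_n.+1). *)
Section empirical.
Context (n : nat) (v : 'I_n.+1 -> W * X).

Definition empirical_weight : {nonneg R} := ((n.+1)%:R^-1 : R)%:nng.

Definition empirical (A : set (borel (W * X)%type)) : \bar R :=
  ((n.+1)%:R^-1 : R)%:E * (\sum_(i < n.+1) \d_(v i : borel (W * X)%type) A)%E.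

Let dm : {measure set (borel (W * X)%type) -> \bar R}^nat :=
  fun k => \d_(v (inord k) : borel (W * X)%type).

Let empiricalE : empirical = mscale empirical_weight (msum dm n.+1).
Proof.
apply/funext => A; rewrite /empirical /mscale /msum /=; congr (_ * _)%E.
by apply: eq_bigr => i _; rewrite /dm inord_val.
Qed.

Let empirical0 : empirical set0 = 0%E.
Proof. by rewrite empiricalE measure0. Qed.

Let empirical_ge0 A : (0 <= empirical A)%E.
Proof. by rewrite empiricalE measure_ge0. Qed.

Let empirical_sigma_additive : semi_sigma_additive empirical.
Proof. rewrite empiricalE; exact: measure_semi_sigma_additive. Qed.

HB.instance Definition _ := isMeasure.Build _ _ _ empirical
  empirical0 empirical_ge0 empirical_sigma_additive.

Let empirical_setT : empirical [set: borel (W * X)%type] = 1%E.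
Proof.
rewrite /empirical.
under eq_bigr do rewrite diracT.
rewrite sumEFin /= -EFinM sumr_const card_ord.
by rewrite mulVf.
Qed.

HB.instance Definition _ :=
  Measure_isProbability.Build _ _ _ empirical empirical_setT.
End empirical.

(** P(W x X): Borel probability measures on W x X with the weak topology,
    i.e. the initial (coarsest) topology making mu |-> \int f dmu continuous
    for every bounded continuous f : W x X -> R. *)
Definition probWX := probability (borel (W * X)%type) R.
HB.instance Definition _ := gen_eqMixin probWX.
HB.instance Definition _ := gen_choiceMixin probWX.

Definition bcfun :=
  {f : W * X -> R | continuous f /\ exists M : R, forall p, `|f p| <= M}.

Definition integrals (mu : probWX) : {ptws bcfun -> R} :=
  fun f => Rintegral mu setT (sval f).

Definition weakP := initial_topology integrals.

Variables (C : W -> set X) (F : weakP -> W -> X -> R).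

Definition profile n (w : 'I_n.+1 -> W) (x : 'I_n.+1 -> X) : 'I_n.+1 -> W * X :=
  fun k => (w k, x k).

Definition emp n (w : 'I_n.+1 -> W) (x : 'I_n.+1 -> X) : weakP :=
  empirical (profile w x) : probWX.

Definition update n (x : 'I_n.+1 -> X) (i : 'I_n.+1) (y : X) : 'I_n.+1 -> X :=
  fun k => if k == i then y else x k.

(** N^eps_n(w): the eps-Nash equilibria with type vector w.
    Note emp w (update x i y) = m + (1/n)(delta_{(w_i,y)} - delta_{(w_i,x_i)}). *)
Definition Nash_eps (eps : R) n (w : tuples n.+1 W) : set (tuples n.+1 X) :=
  [set x : tuples n.+1 X | forall i : 'I_n.+1,
     C (w i) (x i) /\
     F (emp w x) (w i) (x i)
       - inf [set F (emp w (update x i y)) (w i) y | y in C (w i)] <= eps].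

Definition Dset (eps : R) n : set (tuples n.+1 W) :=
  [set w : tuples n.+1 W | Nash_eps eps w !=set0].

End game.
Arguments Dset {R W X} C F eps n _ : rename.

Set Warnings "-notation-overridden,-ambiguous-paths,-notation-incompatible-prefix".
Set Warnings "-redundant-canonical-projection".
From Pilot Require Import Defs.
From HB Require Import structures.
From mathcomp Require Import all_boot all_order all_algebra.
From mathcomp Require Import all_classical all_reals all_analysis.
From mathcomp Require Import lra finmap measurable_realfun.
Import Order.TTheory GRing.Theory Num.Theory.
Import numFieldTopology.Exports.
Local Open Scope classical_set_scope.
Local Open Scope ring_scope.

(* Since the infimum over deviations ranges over a nonempty bounded set, x is an
   eps-equilibrium for w iff, for every i, x_i is in C(w_i) and
   F(m, w_i, x_i) - F(m_i^y, w_i, y) <= eps for every y in C(w_i), where m_i^y is the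
   empirical measure after player i deviates to y. This makes the graph of
   w |-> N^eps_n(w) closed: along a sequence of equilibria converging to (w, x), lower
   hemicontinuity of C turns a deviation y in C(w_i) into deviations y_k -> y along a
   subsequence, and the inequality passes to the limit because F and the empirical
   measure depend continuously on the profile. Then D^eps_n, the projection of this
   closed graph along the compact factor X^n, is closed.

   For the selection, fix finite closed covers of X^n whose mesh tends to 0. Starting
   from N^eps_n(w), each stage intersects the current set with the first set of the
   next cover that meets it; the stages are nonempty, closed and decreasing, and the
   selected point is any point of their intersection. It lies in an open set U as soon
   as a stage misses the complement of U, and this happens at some stage by fineness
   of the covers. By induction on the stage, {w | stage_k(w) meets Z} is Borel for
   every closed Z, so the selection is Borel, hence universally measurable. *)

Section compact_closed.
Context {T Y : topologicalType}.
Hypothesis Y_compact : compact [set: Y].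

Lemma closed_proj_compact (G : set (T * Y)) :
  closed G -> closed [set t | exists y, G (t, y)].
Proof.
move=> G_closed t t_cl.
pose B (V : set T) := [set y | exists2 s, V s & G (s, y)].
have B_filter : ProperFilter (filter_from (nbhs t) B).
  apply: filter_from_proper; last first.
    by move=> V /t_cl [s [[y Gsy] Vs]]; exists y, s.
  apply: filter_from_filter; first by exists setT; exact: filterT.
  move=> V1 V2 V1t V2t; exists (V1 `&` V2); first exact: filterI.
  by move=> y [s [V1s V2s] Gsy]; split; exists s.
have [y [_ y_cluster]] := Y_compact _ B_filter filterT.
exists y; apply: G_closed => N [[V U] [/= Vt Uy] VU_N].
have [z [[s Vs Gsz] Uz]] := y_cluster (B V) U (ex_intro2 _ _ V Vt (fun _ => id)) Uy.
by exists (s, z); split => //; apply: VU_N.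
Qed.

Lemma compact_nested_closed (K : nat -> set Y) :
  (forall k, closed (K k)) -> (forall k, K k !=set0) ->
  (forall k, K k.+1 `<=` K k) -> exists y, forall k, K k y.
Proof.
move=> K_closed K_neq0 K_decr.
have K_mono i j : (i <= j)%N -> K j `<=` K i.
  move=> /subnK <-; elim: (j - i)%N => // d IH.
  by rewrite addSn; exact: subset_trans (K_decr _) IH.
have K_filter : ProperFilter (filter_from [set: nat] K).
  apply: filter_from_proper => [|k _]; last exact: K_neq0.
  apply: filter_from_filter => [|i j _ _]; first by exists 0%N.
  by exists (maxn i j) => // y Ky; split; apply: K_mono Ky;
    [exact: leq_maxl | exact: leq_maxr].
have [y [_ y_cluster]] := Y_compact _ K_filter filterT.
exists y => k; apply: K_closed => U Uy.
by have [z [Kz Uz]] := y_cluster (K k) U (ex_intro2 _ _ k I (fun _ => id)) Uy; exists z.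
Qed.

End compact_closed.

Lemma closed_ball_sub_ball {R : numFieldType} {Y : pseudoMetricType R} (c : Y) (r : R) :
  0 < r -> closed_ball c r `<=` ball c (r + r).
Proof.
move=> r_gt0 y /(_ _ (nbhsx_ballx y r r_gt0)) [z [cz yz]].
exact: ball_triangle cz (ball_sym yz).
Qed.

Lemma compact_fine_closed_covers {R : realType} {Y : pseudoPMetricType R} :
  compact [set: Y] -> exists L : nat -> seq (set Y),
  [/\ forall k j, closed (nth set0 (L k) j),
      forall k y, exists2 j, (j < size (L k))%N & nth set0 (L k) j y &
      forall y U, open U -> U y ->
        exists k, forall j, nth set0 (L k) j y -> nth set0 (L k) j `<=` U].
Proof.
move=> Y_compact; pose r k : R := k.+1%:R^-1.
have r_gt0 k : 0 < r k by rewrite invr_gt0 ltr0Sn.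
have /choice[D D_cover] k : exists D : {fset Y},
    [set: Y] `<=` cover [set` D] (fun c => (ball c (r k))°).
  move: Y_compact; rewrite compact_cover => /(_ Y setT (fun c => (ball c (r k))°)).
  case=> [c _|y _|D _ DY]; last by exists D.
  - exact: open_interior.
  - by exists y => //; exact: nbhsx_ballx.
exists (fun k => [seq closed_ball c (r k) | c <- D k]); split.
- move=> k j; have [j_lt|j_ge] := ltnP j (size (D k)).
    by rewrite (nth_map point) //; exact: closed_ball_closed.
  by rewrite nth_default ?size_map //; exact: closed0.
- move=> k y; have [c Dc cy] := D_cover k y I.
  exists (index c (D k)); first by rewrite size_map index_mem.
  rewrite (nth_map point) ?index_mem // nth_index //.
  by apply: subset_closed_ball; exact: interior_subset.
- move=> y U U_open Uy; have /nbhs_ballP[e e_gt0 yeU] := open_nbhs_nbhs (conj U_open Uy).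
  have [k rk_lt] : exists k, r k < e / 4.
    by have [k] := ltr_add_invr (divr_gt0 e_gt0 (ltr0Sn R 3)); rewrite add0r; exists k.
  exists k => j; have [j_lt|j_ge] := ltnP j (size (D k)); last first.
    by rewrite nth_default ?size_map.
  rewrite (nth_map point) // => cy z cz; apply: yeU.
  have cB := closed_ball_sub_ball (nth point (D k) j) _ (r_gt0 k).
  have := ball_triangle (ball_sym (cB _ cy)) (cB _ cz).
  by apply: le_ball; lra.
Qed.

Lemma seq_closed_closed {R : realType} {T : pseudoMetricType R} (A : set T) :
  (forall (u : nat -> T) t, (forall k, A (u k)) -> u @ \oo --> t -> A t) -> closed A.
Proof.
move=> A_seq t t_cl; have r_gt0 k : 0 < (k.+1%:R^-1 : R) by rewrite invr_gt0.
have /choice[u u_spec] k : exists u, A u /\ ball t k.+1%:R^-1 u.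
  by have [u [Au tu]] := t_cl _ (nbhsx_ballx t _ (r_gt0 k)); exists u.
apply: (A_seq u) => [k|]; first exact: (u_spec k).1.
apply/cvg_ballP => e e_gt0; have [N _ N_e] := near_infty_natSinv_lt (PosNum e_gt0).
by exists N => // k /= Nk; apply: le_ball (ltW (N_e k Nk)) _ (u_spec k).2.
Qed.

Lemma cvg_subseq {T : topologicalType} (u : nat -> T) (phi : nat -> nat) (a : T) :
  {homo phi : k l / (k < l)%N >-> (k < l)%N} -> u @ \oo --> a -> u \o phi @ \oo --> a.
Proof.
move=> phi_incr u_cvg; apply: cvg_comp u_cvg.
have phi_ge k : (k <= phi k)%N.
  by elim: k => // k IH; exact: leq_ltn_trans IH (phi_incr _ _ (ltnSn k)).
by move=> A [N _ NA]; exists N => // k /= Nk; apply: NA; exact: leq_trans Nk (phi_ge k).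
Qed.

Lemma cvg_initial {S : choiceType} {T : topologicalType} (f : S -> T)
    (F : set_system S) (s : S) :
  Filter F -> f @ F --> f s -> F --> (s : initial_topology f).
Proof.
move=> F_filter f_cvg A /= [_ [[B B_open <-] Bfs fB_A]].
by apply: (filterS fB_A); apply: f_cvg; exact: open_nbhs_nbhs.
Qed.

Lemma cvg_ptws {I : Type} {V : topologicalType}
    (F : set_system {ptws I -> V}) (g : {ptws I -> V}) :
  Filter F -> (forall i, (fun h => h i) @ F --> g i) -> F --> g.
Proof. by move=> F_filter g_cvg; apply/cvg_sup => i; exact: cvg_initial. Qed.

Lemma continuous_pair {T U V : topologicalType} (f : T -> U) (g : T -> V) :
  continuous f -> continuous g -> continuous (fun t => (f t, g t)).
Proof. by move=> f_cont g_cont t; apply: cvg_pair; [exact: f_cont | exact: g_cont]. Qed.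

Lemma continuous_coord {V : topologicalType} n (i : 'I_n) :
  continuous (fun x : tuples n V => x i).
Proof. exact: (@proj_continuous _ (fun _ => V) i). Qed.

Lemma compact_tuples {V : topologicalType} n :
  compact [set: V] -> compact [set: tuples n V].
Proof.
move=> V_compact.
have := @tychonoff 'I_n (fun _ => V) (fun _ => [set: V]) (fun _ => V_compact).
by rewrite (_ : [set f | _] = [set: 'I_n -> V]) //; apply/seteqP; split.
Qed.

(* Defs equips tuples only with its topology and base point; its metric comes from
   the underlying product, so the pointed metric structure has to be declared. *)
HB.instance Definition _ (R : realType) n (X : pseudoPMetricType R) :=
  PseudoMetric.on (tuples n X).

Lemma measurable_univ_measurable {R : realType} {T : ptopologicalType} (A : set T) :
  measurable (A : set (borel T)) -> univ_measurable R A.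
Proof. by move=> A_mble mu; exists A, A; split=> //; rewrite setDv measure0. Qed.

Lemma borel_closed {T : ptopologicalType} (A : set T) :
  closed A -> measurable (A : set (borel T)).
Proof.
move=> A_closed; rewrite -[A]setCK; apply: measurableC; apply: sub_sigma_algebra.
exact: closed_openC.
Qed.

Section Borel_selection.
Context {R : realType} {T : ptopologicalType} {Y : pseudoPMetricType R}.
Variable Phi : T -> set Y.
Hypothesis Y_compact : compact [set: Y].
Hypothesis Phi_graph_closed : closed [set p : T * Y | Phi p.1 p.2].

Lemma closed_meet (Z : set Y) : closed Z -> closed [set t | Phi t `&` Z !=set0].
Proof.
move=> Z_closed; have snd_Z_closed : closed (snd @^-1` Z : set (T * Y)).
  by apply: preimage_closed Z_closed => -[t y] _; exact: cvg_snd.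
exact: closed_proj_compact Y_compact _ (closedI Phi_graph_closed snd_Z_closed).
Qed.

Lemma closed_fiber t : closed (Phi t).
Proof.
rewrite (_ : Phi t = pair t @^-1` [set p : T * Y | Phi p.1 p.2]) //.
apply: preimage_closed Phi_graph_closed => y _.
by apply: cvg_pair; [exact: cvg_cst | exact: cvg_id].
Qed.

Variable L : nat -> seq (set Y).
Hypothesis L_closed : forall k j, closed (nth set0 (L k) j).
Hypothesis L_cover : forall k y, exists2 j, (j < size (L k))%N & nth set0 (L k) j y.
Hypothesis L_fine : forall y U, open U -> U y ->
  exists k, forall j, nth set0 (L k) j y -> nth set0 (L k) j `<=` U.

Local Notation A k j := (nth set0 (L k) j).

Definition first_meet (K : set Y) (k : nat) : nat :=
  find (fun B => `[< K `&` B !=set0 >]) (L k).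

Fixpoint stage (t : T) (k : nat) : set Y :=
  if k is k'.+1 then stage t k' `&` A k' (first_meet (stage t k') k') else Phi t.

Definition selection (t : T) : Y := xget point [set y | forall k, stage t k y].

Lemma first_meetP (K : set Y) k : K !=set0 -> K `&` A k (first_meet K k) !=set0.
Proof.
move=> [y Ky]; have [j j_lt Ay] := L_cover k y.
have has_meet : has (fun B => `[< K `&` B !=set0 >]) (L k).
  by apply/(has_nthP set0); exists j => //; apply/asboolP; exists y.
exact/asboolP/(nth_find set0 has_meet).
Qed.

Lemma meet_first_meetP (K Z : set Y) k :
  K `&` A k (first_meet K k) `&` Z !=set0 <->
  exists j, K `&` (A k j `&` Z) !=set0 /\ forall i, (i < j)%N -> ~ (K `&` A k i !=set0).
Proof.
split=> [[y [[Ky Ay] Zy]]|[j [[y [Ky [Ay Zy]]] before_j]]].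
  exists (first_meet K k); split; first by exists y.
  by move=> i /(before_find set0) /asboolPn.
suff -> : first_meet K k = j by exists y.
have [lt_j|gt_j|//] := ltngtP (first_meet K k) j.
  by have := before_j _ lt_j (first_meetP K k (ex_intro _ y Ky)).
by have /asboolPn[] := before_find set0 gt_j; exists y.
Qed.

Lemma stage_closed t k : closed (stage t k).
Proof. by elim: k => [|k IH] /=; [exact: closed_fiber | exact: closedI]. Qed.

Lemma stage_neq0 t k : Phi t !=set0 -> stage t k !=set0.
Proof. by move=> Phi_t; elim: k => //= k; exact: first_meetP. Qed.

Lemma selection_stage t : Phi t !=set0 -> forall k, stage t k (selection t).
Proof.
move=> Phi_t; apply: (xgetPex point (P := [set y | forall k, stage t k y])).
apply: (compact_nested_closed Y_compact); first exact: stage_closed.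
  by move=> k; exact: stage_neq0.
by move=> k y [].
Qed.

Lemma selectionP t : Phi t !=set0 -> Phi t (selection t).
Proof. by move=> Phi_t; exact: selection_stage Phi_t 0%N. Qed.

Lemma measurable_stage_meet k Z :
  closed Z -> measurable ([set t | stage t k `&` Z !=set0] : set (borel T)).
Proof.
elim: k Z => [|k IH] Z Z_closed; first by apply: borel_closed; exact: closed_meet.
have -> : [set t | stage t k.+1 `&` Z !=set0] =
    \bigcup_j ([set t | stage t k `&` (A k j `&` Z) !=set0] `&`
      \bigcap_(i in `I_j) ~` [set t | stage t k `&` A k i !=set0]).
  apply/seteqP; split=> t.
    by move=> /meet_first_meetP [j [? ?]]; exists j.
  by move=> [j _ [? ?]]; apply/meet_first_meetP; exists j.
apply: bigcupT_measurable => j; apply: measurableI.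
  exact: IH (closedI (L_closed k j) Z_closed).
by apply: bigcap_measurableType => i _; exact: measurableC (IH _ (L_closed k i)).
Qed.

Lemma selection_preimage_open U : open U ->
  [set t | Phi t !=set0] `&` selection @^-1` U =
  \bigcup_k ([set t | Phi t !=set0] `\` [set t | stage t k `&` ~` U !=set0]).
Proof.
move=> U_open; apply/seteqP; split=> t.
  move=> [Phi_t U_sel]; have [k sub_U] := L_fine _ _ U_open U_sel.
  exists k.+1 => //; split=> // -[y [[_ Ay] nUy]]; apply: nUy.
  have [_ A_sel] := selection_stage t Phi_t k.+1.
  exact: sub_U _ A_sel _ Ay.
move=> [k _ [Phi_t not_meet]]; split=> //.
apply: contrapT => nU; apply: not_meet; exists (selection t).
by split=> //; exact: selection_stage.
Qed.

Lemma measurable_dom : measurable ([set t | Phi t !=set0] : set (borel T)).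
Proof.
exact: borel_closed (closed_proj_compact Y_compact _ Phi_graph_closed).
Qed.

Lemma measurable_selection :
  measurable_fun ([set t | Phi t !=set0] : set (borel T))
    (selection : borel T -> borel Y).
Proof.
apply: (@measurability _ _ (borel T) (borel Y) _ _ (@open Y)) => // _ [U U_open <-].
rewrite selection_preimage_open //; apply: bigcupT_measurable => k.
apply: measurableD; first exact: measurable_dom.
exact: measurable_stage_meet (open_closedC U_open).
Qed.

End Borel_selection.

Theorem closed_graph_Borel_selection {R : realType} {T : ptopologicalType}
    {Y : pseudoPMetricType R} (Phi : T -> set Y) :
  compact [set: Y] -> closed [set p : T * Y | Phi p.1 p.2] ->
  exists f : T -> Y, (forall t, Phi t !=set0 -> Phi t (f t)) /\
    measurable_fun ([set t | Phi t !=set0] : set (borel T)) (f : borel T -> borel Y).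
Proof.
move=> Y_compact Phi_closed.
have [L [L_closed L_cover L_fine]] := compact_fine_closed_covers Y_compact.
exists (selection Phi L); split; first exact: selectionP.
exact: measurable_selection.
Qed.

Lemma continuous_borel_measurable {R : realType} {W X : ptopologicalType}
    (g : W * X -> R) :
  continuous g -> measurable_fun [set: borel (W * X)%type] g.
Proof.
move=> /continuousP g_cont.
apply: (measurability _ (RGenOpens.measurableE R)) => _ [_ [a [b ->]] <-].
by apply: sub_sigma_algebra; rewrite setTI; exact/g_cont/interval_open.
Qed.

Section empirical_integral.
Context {R : realType} {W X : ptopologicalType} {n : nat} (v : 'I_n.+1 -> W * X).

Lemma empiricalE : (empirical R v : set (borel (W * X)%type) -> \bar R) =
  mscale (empirical_weight R n)
    (msum (fun k => \d_(v (inord k) : borel (W * X)%type)) n.+1).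
Proof.
apply/funext => A; rewrite /empirical /mscale /msum /=; congr (_ * _)%E.
by apply: eq_bigr => i _; rewrite inord_val.
Qed.

Lemma ge0_integral_empirical (g : W * X -> \bar R) :
  measurable_fun [set: borel (W * X)%type] g -> (forall p, 0 <= g p)%E ->
  (\int[empirical R v]_p g p = (n.+1%:R^-1)%:E * \sum_(i < n.+1) g (v i))%E.
Proof.
move=> g_mble g_ge0.
rewrite empiricalE ge0_integral_mscale // ge0_integral_measure_sum //.
congr (_ * _)%E; apply: eq_bigr => i _.
by rewrite integral_dirac // diracT mul1e inord_val.
Qed.

Lemma Rintegral_empirical (g : W * X -> R) :
  measurable_fun [set: borel (W * X)%type] g ->
  Rintegral (empirical R v : probWX R W X) setT g =
    n.+1%:R^-1 * \sum_(i < n.+1) g (v i).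
Proof.
move=> g_mble; rewrite /Rintegral integralE funerpos funerneg.
rewrite !ge0_integral_empirical //; last 4 first.
- by apply/measurable_EFinP; exact: measurable_funrneg.
- by move=> p; rewrite lee_fin funrneg_ge0.
- by apply/measurable_EFinP; exact: measurable_funrpos.
- by move=> p; rewrite lee_fin funrpos_ge0.
rewrite !sumEFin -!EFinM -EFinB /= -mulrBr -sumrB.
by congr (_ * _); apply: eq_bigr => i _; rewrite -[in RHS](funrposBneg g).
Qed.

End empirical_integral.

Section game_continuity.
Context {R : realType} {W X : ptopologicalType} {n : nat}.
Local Notation profiles := (tuples n.+1 W * tuples n.+1 X)%type.

Lemma continuous_fst_coord (i : 'I_n.+1) : continuous (fun p : profiles => p.1 i).
Proof.
move=> p; apply: (cvg_comp fst (fun w : tuples n.+1 W => w i)); first exact: cvg_fst.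
exact: continuous_coord.
Qed.

Lemma continuous_snd_coord (i : 'I_n.+1) : continuous (fun p : profiles => p.2 i).
Proof.
move=> p; apply: (cvg_comp snd (fun x : tuples n.+1 X => x i)); first exact: cvg_snd.
exact: continuous_coord.
Qed.

Lemma continuous_coord_pair (i : 'I_n.+1) :
  continuous (fun p : profiles => (p.1 i, p.2 i)).
Proof. exact: continuous_pair _ _ (continuous_fst_coord i) (continuous_snd_coord i). Qed.

Lemma continuous_emp : continuous (fun p : profiles => emp R p.1 p.2).
Proof.
apply: (@continuous_comp_initial _ _ _ (@integrals R W X)) => p.
apply: cvg_ptws => f; have f_cont : continuous (sval f) := (svalP f).1.
have intE (q : profiles) : integrals (emp R q.1 q.2) f =
    n.+1%:R^-1 * \sum_(i < n.+1) sval f (q.1 i, q.2 i).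
  exact: Rintegral_empirical (continuous_borel_measurable _ f_cont).
change ((fun q : profiles => integrals (emp R q.1 q.2) f) @ p -->
  integrals (emp R p.1 p.2) f).
rewrite (eq_cvg _ _ intE) intE; apply: cvgMl_tmp.
apply: (@cvg_big _ _ +%R 0 xpredT add_continuous) => i _.
apply: (cvg_comp (fun q : profiles => (q.1 i, q.2 i)) (sval f)); last exact: f_cont.
exact: continuous_coord_pair.
Qed.

Lemma continuous_update (i : 'I_n.+1) :
  continuous (fun q : tuples n.+1 X * X => update q.1 i q.2 : tuples n.+1 X).
Proof.
move=> [x y]; apply: cvg_ptws => k.
change ((fun q : tuples n.+1 X * X => update q.1 i q.2 k) @ (x, y) --> update x i y k).
rewrite /update; case: eqP => _.
  exact: cvg_snd.
apply: (cvg_comp fst (fun x : tuples n.+1 X => x k)); first exact: cvg_fst.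
exact: continuous_coord.
Qed.

Context {F : weakP R W X -> W -> X -> R}
  (F_continuous : continuous (fun p : weakP R W X * W * X => F p.1.1 p.1.2 p.2))
  (i : 'I_n.+1).

Let payoff (r : profiles * X) : R := F (emp R r.1.1 r.1.2) (r.1.1 i) r.2.

Lemma continuous_payoff : continuous payoff.
Proof.
have args_cont : continuous (fun r : profiles * X => ((emp R r.1.1 r.1.2, r.1.1 i), r.2)).
  apply: continuous_pair => [|r]; last exact: cvg_snd.
  apply: continuous_pair => r.
    apply: (cvg_comp fst (fun p : profiles => emp R p.1 p.2)); first exact: cvg_fst.
    exact: continuous_emp.
  apply: (cvg_comp fst (fun p : profiles => p.1 i)); first exact: cvg_fst.
  exact: continuous_fst_coord.
by move=> r; exact: continuous_comp (args_cont r) (F_continuous _).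
Qed.

Lemma continuous_own_payoff :
  continuous (fun p : profiles => F (emp R p.1 p.2) (p.1 i) (p.2 i)).
Proof.
move=> p; apply: (@continuous_comp _ _ _ (fun p : profiles => (p, p.2 i)) payoff);
  last exact: continuous_payoff.
exact: (continuous_pair _ _ (fun q => cvg_id) (continuous_snd_coord i)).
Qed.

Lemma continuous_deviation_payoff :
  continuous (fun r : profiles * X =>
    F (emp R r.1.1 (update r.1.2 i r.2)) (r.1.1 i) r.2).
Proof.
move=> r; apply: (@continuous_comp _ _ _
  (fun r : profiles * X => ((r.1.1, update r.1.2 i r.2 : tuples n.+1 X), r.2)) payoff);
  last exact: continuous_payoff.
apply: continuous_pair => [|{}r]; last exact: cvg_snd.
apply: continuous_pair => {}r.
  by apply: (cvg_comp fst fst); exact: cvg_fst.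
apply: (@continuous_comp _ _ _ (fun r : profiles * X => (r.1.2, r.2)) _ _ _
  (continuous_update _ _)).
apply: continuous_pair => {}r; last exact: cvg_snd.
by apply: (cvg_comp fst snd); [exact: cvg_fst | exact: cvg_snd].
Qed.

End game_continuity.

Lemma subr_inf_leP {R : realType} (S : set R) (a e : R) :
  S !=set0 -> has_lbound S -> a - inf S <= e <-> forall s, S s -> a - s <= e.
Proof.
move=> S_neq0 S_lb; split=> [le_e s Ss|le_e].
  by have := ge_inf S_lb Ss; lra.
have : a - e <= inf S by apply: lb_le_inf S_neq0 _ => s Ss; have := le_e s Ss; lra.
lra.
Qed.

Section Nash_graph.
Context {R : realType} {W X : pseudoPMetricType R} {C : W -> set X}
  {F : weakP R W X -> W -> X -> R}.
Hypothesis C_nonempty : forall w, C w !=set0.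
Hypothesis C_graph_closed : closed [set p : W * X | C p.1 p.2].
Hypothesis C_lower : forall (w_ : nat -> W) (w : W) (x : X),
  w_ @ \oo --> w -> C w x ->
  exists (phi : nat -> nat) (x_ : nat -> X),
    [/\ {homo phi : k l / (k < l)%N >-> (k < l)%N},
        forall k, C (w_ (phi k)) (x_ k) &
        x_ @ \oo --> x].
Hypothesis F_bounded : exists M : R, forall m w x, `|F m w x| <= M.
Hypothesis F_continuous :
  continuous (fun p : weakP R W X * W * X => F p.1.1 p.1.2 p.2).
Variables (n : nat) (eps : R).

Lemma Nash_epsP (w : tuples n.+1 W) (x : tuples n.+1 X) :
  Nash_eps C F eps w x <-> forall i, C (w i) (x i) /\
    forall y, C (w i) y ->
      F (emp R w x) (w i) (x i) - F (emp R w (update x i y)) (w i) y <= eps.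
Proof.
have [M F_le_M] := F_bounded.
suff deviationP i : F (emp R w x) (w i) (x i) -
    inf [set F (emp R w (update x i y)) (w i) y | y in C (w i)] <= eps <->
  forall y, C (w i) y ->
    F (emp R w x) (w i) (x i) - F (emp R w (update x i y)) (w i) y <= eps.
  by split=> Nash i; have [Cx dev] := Nash i; split=> //; apply/deviationP.
rewrite subr_inf_leP.
- by split=> [le_e y Cy|le_e _ [y Cy <-]]; [apply: le_e; exists y | exact: le_e].
- by have [y Cy] := C_nonempty (w i); exists (F (emp R w (update x i y)) (w i) y), y.
- exists (- M) => _ [y _ <-]; have := F_le_M (emp R w (update x i y)) (w i) y.
  by rewrite ler_norml => /andP[].
Qed.

Lemma closed_Nash_graph :
  closed [set p : tuples n.+1 W * tuples n.+1 X | Nash_eps C F eps p.1 p.2].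
Proof.
apply: seq_closed_closed => q [w x] /(_ _)/Nash_epsP Nash_q q_cvg; apply/Nash_epsP => i.
have wxi_cvg := cvg_comp _ _ q_cvg (continuous_coord_pair i (w, x)).
split=> [|y Cy].
  apply: (closed_cvg _ C_graph_closed _ _ wxi_cvg).
  by apply: nearW => k; exact: (Nash_q k i).1.
have wi_cvg := cvg_comp _ _ q_cvg (continuous_fst_coord i (w, x)).
have [phi [y_ [phi_incr Cy_ y_cvg]]] := C_lower _ _ _ wi_cvg Cy.
have q_phi_cvg := cvg_subseq _ _ _ phi_incr q_cvg.
have own_cvg := cvg_comp _ _ q_phi_cvg (continuous_own_payoff F_continuous i (w, x)).
have qy_cvg : (fun k => (q (phi k), y_ k)) @ \oo --> ((w, x), y).
  exact: cvg_pair q_phi_cvg y_cvg.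
have dev_cvg := cvg_comp _ _ qy_cvg
  (continuous_deviation_payoff F_continuous i ((w, x), y)).
apply: (closed_cvg _ (@closed_le _ eps) _ _ (cvgB own_cvg dev_cvg)).
by apply: nearW => k; exact: (Nash_q (phi k) i).2 _ (Cy_ k).
Qed.

End Nash_graph.

Theorem lemma3p4 (R : realType) (W X : pseudoPMetricType R)
  (* X is a compact metric space *)
  (X_hausdorff : hausdorff_space X) (X_compact : compact [set: X])
  (* W is a complete separable metric space *)
  (W_hausdorff : hausdorff_space W)
  (W_complete : forall G : set_system W, ProperFilter G -> cauchy G ->
                  exists w : W, G --> w)
  (W_separable : exists S : set W, countable S /\ closure S = [set: W])
  (C : W -> set X)
  (C_nonempty : forall w, C w !=set0)
  (C_closed : forall w, closed (C w))
  (C_graph_closed : closed [set p : W * X | C p.1 p.2])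
  (C_lower : forall (w_ : nat -> W) (w : W) (x : X),
     w_ @ \oo --> w -> C w x ->
     exists (phi : nat -> nat) (x_ : nat -> X),
       [/\ {homo phi : k l / (k < l)%N >-> (k < l)%N},
           forall k, C (w_ (phi k)) (x_ k) &
           x_ @ \oo --> x])
  (F : weakP R W X -> W -> X -> R)
  (F_bounded : exists M : R, forall m w x, `|F m w x| <= M)
  (F_continuous : continuous (fun p : weakP R W X * W * X => F p.1.1 p.1.2 p.2))
  (n : nat) (eps : R) (eps_ge0 : 0 <= eps) :
  closed (Dset C F eps n) /\
  exists xhat : tuples n.+1 W -> tuples n.+1 X,
    univ_measurable_fun R (Dset C F eps n) xhat /\
    forall w, Dset C F eps n w -> Nash_eps C F eps w (xhat w).
Proof.
have Nash_closed := closed_Nash_graph C_nonempty C_graph_closed C_lower F_bounded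
  F_continuous n eps.
have Xn_compact := compact_tuples n.+1 X_compact.
have D_closed : closed (Dset C F eps n) := closed_proj_compact Xn_compact _ Nash_closed.
have [xhat [xhat_Nash xhat_mble]] :=
  closed_graph_Borel_selection _ Xn_compact Nash_closed.
split=> //; exists xhat; split=> [B B_mble|]; last exact: xhat_Nash.
apply: measurable_univ_measurable; exact: xhat_mble (borel_closed _ D_closed) _ B_mble.
Qed.
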